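(* Let $n\ge 2$ and let $p_1,\dots,p_r$ be all the primes $p$ satisfying $p^{\acute v_p(n)}<\frac n2$. Then the number of vertices of full degree in $D_n$ is $$F(D_n)=n-\sum_{1\le i\le r}\left\lfloor\frac{n}{p_i^{\acute v_{p_i}(n)}}\right\rfloor+\sum_{1\le i<j\le r}\left\lfloor\frac{n}{p_i^{\acute v_{p_i}(n)}p_j^{\acute v_{p_j}(n)}}\right\rfloor-\cdots+(-1)^r\left\lfloor\frac{n}{\prod_{i=1}^r p_i^{\acute v_{p_i}(n)}}\right\rfloor.$$
   Context: $D_n$ is the graph with vertex set $\{1,\dots,n\}$ in which distinct $a,b$ are adjacent iff $\gcd(a,b)\mid n$ (the maximal Diophantine graph of order $n$). For a prime $p$, $v_p(n)$ is the exponent of $p$ in $n$ and $\acute v_p(n):=v_p(n)+1$. For a graph $G$ of order $n$, $F(G)$ is the number of vertices of degree $n-1$. *)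

From mathcomp Require Import all_boot all_order all_algebra.
Set Implicit Arguments. Unset Strict Implicit. Unset Printing Implicit Defensive.

(* Vertex i : 'I_n represents the integer i.+1 in {1,...,n}. *)

Definition Dn_adj (n : nat) : rel 'I_n :=
  fun a b => (a != b) && (gcdn a.+1 b.+1 %| n).

Definition deg (n : nat) (e : rel 'I_n) (a : 'I_n) : nat :=
  #|[set b : 'I_n | e a b]|.

Definition F_full (n : nat) (e : rel 'I_n) : nat :=
  #|[set a : 'I_n | deg e a == n.-1]|.

Definition vacute (p n : nat) : nat := (logn p n).+1.

(* The primes p with p^{v'_p(n)} < n/2, i.e. 2 * p^{v'_p(n)} < n.
   Every such prime is < n, so they all lie in 'I_n.+1. *)
Definition small_primes (n : nat) : {set 'I_n.+1} :=
  [set p : 'I_n.+1 | prime p && (2 * p ^ vacute p n < n)].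

From mathcomp Require Import all_boot all_order all_algebra.
From mathcomp Require Import zify.

Set Implicit Arguments.
Unset Strict Implicit.
Unset Printing Implicit Defensive.

Import GRing.Theory Num.Theory.

(* Write q_p := p ^ vacute p n.  A vertex a has full degree in D_n iff no small
   prime p has q_p | a: if q_p | a, one of q_p, 2 q_p is another vertex b with
   q_p | gcd(a, b) but q_p not dividing n; conversely, if gcd(a, b) does not
   divide n, some q_p divides both a and b, two distinct multiples of q_p in
   [1, n] force 2 q_p <= n, and 2 q_p = n is impossible as q_p does not divide n.
   The q_p are pairwise coprime, so counting the vertices divisible by none of
   them is inclusion-exclusion with the terms n %/ prod q_p. *)

Lemma sum_powerset_sign (T : finType) (A : {set T}) :
  (\sum_(S in powerset A) (-1 : int) ^+ #|S| = (A == set0)%:R)%R.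
Proof.
have [->|[x xA]] := set_0Vmem A.
  by rewrite powerset0 big_set1 cards0 eqxx expr0.
have /negbTE -> : A != set0 by apply/set0Pn; exists x.
(* Toggling [x] is a sign-reversing involution of [powerset A]. *)
pose toggle (S : {set T}) := if x \in S then S :\ x else x |: S.
have toggleK : involutive toggle.
  move=> S; rewrite /toggle; case: (boolP (x \in S)) => xS.
    by rewrite !inE eqxx /= setD1K.
  by rewrite setU11 setU1K.
have toggle_sub S : (toggle S \subset A) = (S \subset A).
  rewrite /toggle; case: (boolP (x \in S)) => xS.
    by rewrite -{2}(setD1K xS) subUset sub1set xA.
  by rewrite subUset sub1set xA.
have toggle_sign S : ((-1 : int) ^+ #|toggle S| = - (-1) ^+ #|S|)%R.
  rewrite /toggle; case: (boolP (x \in S)) => xS.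
    by rewrite (cardsD1 x S) xS add1n exprS mulN1r opprK.
  by rewrite cardsU1 xS add1n exprS mulN1r.
set s := (\sum_(S in _) _)%R.
have : s = (- s)%R.
  rewrite /s -sumrN (reindex_inj (inv_inj toggleK)) /=.
  by apply: eq_big => S; rewrite ?powersetE ?toggle_sub // => _; rewrite toggle_sign.
move=> ss; have : (s *+ 2 == 0)%R by rewrite mulr2n {1}ss addNr.
by rewrite mulrn_eq0 => /eqP.
Qed.

Lemma card_set_sum_indicator (T : finType) (P : pred T) :
  (#|[set x | P x]|%:R = \sum_(x : T) (P x)%:R :> int)%R.
Proof.
by rewrite -sum1dep_card natr_sum big_mkcond /=; apply: eq_bigr => x _; case: (P x).
Qed.

Lemma card_disjoint_incl_excl (T I : finType) (A : {set I}) (D : T -> {set I}) :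
  (#|[set x | [disjoint A & D x]]|%:R =
   \sum_(S in powerset A) (-1) ^+ #|S| * #|[set x | S \subset D x]|%:R :> int)%R.
Proof.
rewrite card_set_sum_indicator.
under [RHS]eq_bigr do rewrite card_set_sum_indicator mulr_sumr.
rewrite exchange_big /=; apply: eq_bigr => x _.
rewrite -setI_eq0 -sum_powerset_sign big_mkcond [RHS]big_mkcond /=.
apply: eq_bigr => S _; rewrite !powersetE subsetI.
by case: (S \subset A); case: (S \subset D x); rewrite /= ?mulr1 ?mulr0.
Qed.

Lemma dvdn_prod_coprime (I : eqType) (s : seq I) (F : I -> nat) m :
  uniq s -> {in s &, forall i j, i != j -> coprime (F i) (F j)} ->
  (\prod_(i <- s) F i %| m) = all (fun i => F i %| m) s.
Proof.
elim: s => [|x s IHs] /=; first by rewrite big_nil dvd1n.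
move=> /andP[xNs s_uniq] cop; rewrite big_cons Gauss_dvd; last first.
  rewrite big_seq; apply: (big_ind (coprime (F x))) => [|k l Fk Fl|i si].
  - exact: coprimen1.
  - by rewrite coprimeMr Fk.
  by apply: cop; rewrite ?inE ?eqxx ?si ?orbT //; apply: contraNneq xNs => ->.
by rewrite IHs // => i j si sj; apply: cop; rewrite inE ?si ?sj orbT.
Qed.

Lemma card_multiples n m : 0 < m -> #|[set a : 'I_n | m %| a.+1]| = n %/ m.
Proof.
move=> m_gt0; rewrite -sum1dep_card big_mkcond /=.
elim: n => [|n IHn]; first by rewrite big_ord0 div0n.
by rewrite big_ord_recr /= IHn divnS // addnC; case: (m %| n.+1).
Qed.

Lemma vacute_pfactor_ndvd p n : prime p -> 0 < n -> ~~ (p ^ vacute p n %| n).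
Proof. by move=> p_pr n_gt0; rewrite pfactor_dvdn // ltnn. Qed.

Lemma vacute_pfactor_gt0 n p : prime p -> 0 < p ^ vacute p n.
Proof. by move=> p_pr; rewrite expn_gt0 prime_gt0. Qed.

Lemma exists_gcdn_ndvd n x p :
  prime p -> 2 * p ^ vacute p n < n -> p ^ vacute p n %| x -> 0 < x <= n ->
  exists2 y, 0 < y <= n & (y != x) && ~~ (gcdn x y %| n).
Proof.
set q := p ^ vacute p n => p_pr q_small q_x /andP[x_gt0 x_le].
have q_gt0 : 0 < q := vacute_pfactor_gt0 n p_pr.
have n_gt0 : 0 < n by lia.
exists (if x == q then 2 * q else q); first by case: ifP; lia.
apply/andP; split.
  by case: (x =P q) => [->|/eqP xNq]; [lia | rewrite eq_sym].
apply: contra (vacute_pfactor_ndvd p_pr n_gt0) => gcd_n.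
apply: dvdn_trans gcd_n; rewrite dvdn_gcd q_x.
by case: ifP => _ /=; [apply: dvdn_mull|].
Qed.

Lemma gcdn_ndvd_small_prime n x y :
  0 < x <= n -> 0 < y <= n -> x != y -> ~~ (gcdn x y %| n) ->
  exists2 p, prime p & (2 * p ^ vacute p n < n) && (p ^ vacute p n %| x).
Proof.
move=> /andP[x_gt0 x_le] /andP[y_gt0 y_le] xNy gcd_ndvd.
have n_gt0 : 0 < n by lia.
have g_gt0 : 0 < gcdn x y by rewrite gcdn_gt0 x_gt0.
have [p p_g p_part_ndvd] : exists2 p, p \in primes (gcdn x y) & ~~ ((gcdn x y)`_p %| n).
  apply/hasP; apply: contraR gcd_ndvd => /hasPn p_parts.
  by apply/dvdn_partP => // p /p_parts /negPn.
have p_pr : prime p by move: p_g; rewrite mem_primes => /andP[].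
set q := p ^ vacute p n.
have q_g : q %| gcdn x y by rewrite pfactor_dvdn // ltnNge -pfactor_dvdn // -p_part.
have [/dvdnP[k x_eq] /dvdnP[l y_eq]] : q %| x /\ q %| y.
  by split; apply: dvdn_trans q_g _; rewrite ?dvdn_gcdl ?dvdn_gcdr.
exists p => //; rewrite x_eq dvdn_mull // andbT.
have q2_le : 2 * q <= n.
  subst x y; move: x_gt0 y_gt0; rewrite !muln_gt0 => /andP[k_gt0 _] /andP[l_gt0 _].
  have [two_k|two_l] : 1 < k \/ 1 < l.
    apply/orP; apply: contraR xNy; rewrite negb_or -!leqNgt => /andP[k_le1 l_le1].
    by rewrite (@anti_leq k 1) ?k_le1 // (@anti_leq l 1) ?l_le1.
  - by apply: leq_trans x_le; rewrite leq_mul2r two_k orbT.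
  - by apply: leq_trans y_le; rewrite leq_mul2r two_l orbT.
rewrite ltn_neqAle q2_le andbT; apply: contraNneq (vacute_pfactor_ndvd p_pr n_gt0).
by move=> q2_n; rewrite -[X in _ %| X]q2_n dvdn_mull.
Qed.

Lemma full_degreeE n (e : rel 'I_n) a :
  irreflexive e -> (deg e a == n.-1) = [forall b, (b != a) ==> e a b].
Proof.
move=> e_irr.
have nbhd_sub : [set b | e a b] \subset [set~ a].
  by apply/subsetP => b; rewrite !inE; apply: contraTneq => ->; rewrite e_irr.
rewrite /deg -[n in n.-1]card_ord -(cardsC1 a) (eq_leqif (subset_leqif_cards nbhd_sub)).
rewrite eqEsubset nbhd_sub /=; apply/subsetP/forallP => [sup b|adj b].
  by apply/implyP => bNa; have := sup b; rewrite !inE => ->.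
by rewrite !inE => bNa; have /implyP := adj b; apply.
Qed.

Definition vacute_divisors (n a : nat) : {set 'I_n.+1} :=
  [set p : 'I_n.+1 | p ^ vacute p n %| a].

Lemma Dn_full_degreeE n (a : 'I_n) :
  (deg (@Dn_adj n) a == n.-1) = [disjoint small_primes n & vacute_divisors n a.+1].
Proof.
rewrite full_degreeE => [|b]; last by rewrite /Dn_adj eqxx.
have a_rng : 0 < a.+1 <= n by rewrite ltn_ord.
rewrite disjoint_subset; apply/forallP/subsetP => [adj p | no_div b].
  rewrite !inE => /andP[p_pr p_small]; apply/negP => q_a.
  have [y y_rng /andP[yNa gcd_ndvd]] := exists_gcdn_ndvd p_pr p_small q_a a_rng.
  have y_lt : y.-1 < n by case/andP: y_rng => y_gt0 y_le; rewrite prednK.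
  have b_val : (Ordinal y_lt).+1 = y by rewrite /= prednK //; case/andP: y_rng.
  have := adj (Ordinal y_lt); rewrite /Dn_adj b_val (negbTE gcd_ndvd) andbF implybF negbK.
  by move=> /eqP b_a; rewrite -b_a b_val eqxx in yNa.
apply/implyP => bNa; rewrite /Dn_adj eq_sym bNa /=; apply: contraT => gcd_ndvd.
have b_rng : 0 < b.+1 <= n by rewrite ltn_ord.
have abN : a.+1 != b.+1 by rewrite eqSS eq_sym.
have [p p_pr /andP[p_small q_a]] := gcdn_ndvd_small_prime a_rng b_rng abN gcd_ndvd.
have p_lt : p < n.+1.
  have : p <= p ^ vacute p n by rewrite expnS leq_pmulr // expn_gt0 prime_gt0.
  lia.
by have := no_div (Ordinal p_lt); rewrite !inE /= p_pr p_small q_a => /(_ isT).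
Qed.

Lemma subset_vacute_divisorsE n (S : {set 'I_n.+1}) m :
  S \subset small_primes n ->
  (S \subset vacute_divisors n m) = (\prod_(p in S) p ^ vacute p n %| m).
Proof.
move=> S_small; rewrite -big_enum /= dvdn_prod_coprime ?enum_uniq //; last first.
  move=> p p' /[!mem_enum] /(subsetP S_small) /[!inE] /andP[p_pr _].
  move=> /(subsetP S_small) /[!inE] /andP[p'_pr _] pNp'.
  by rewrite coprime_pexpl // coprime_pexpr // prime_coprime // dvdn_prime2.
apply/subsetP/allP => [div p | div p p_S]; first by rewrite mem_enum => /div /[!inE].
by rewrite inE div ?mem_enum.
Qed.

Lemma card_vacute_multiples n (S : {set 'I_n.+1}) :
  S \subset small_primes n ->
  #|[set a : 'I_n | S \subset vacute_divisors n a.+1]| =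
  n %/ \prod_(p in S) p ^ vacute p n.
Proof.
move=> S_small; rewrite -card_multiples; last first.
  apply: (big_ind (leq 1)) => // [k l k_gt0 l_gt0|p /(subsetP S_small) /[!inE] /andP[p_pr _]].
    by rewrite muln_gt0 k_gt0.
  exact: vacute_pfactor_gt0.
by apply: eq_card => a; rewrite !inE subset_vacute_divisorsE.
Qed.

Local Open Scope ring_scope.

Theorem mainTheorem5 (n : nat) (hn : (2 <= n)%N) :
  (@F_full n (@Dn_adj n))%:Z =
  \sum_(S in powerset (small_primes n))
     (-1) ^+ #|S| * ((n %/ \prod_(p in S) (nat_of_ord p) ^ vacute p n)%N)%:Z.
Proof.
have -> : F_full (@Dn_adj n) =
    #|[set a : 'I_n | [disjoint small_primes n & vacute_divisors n a.+1]]|.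
  by apply: eq_card => a; rewrite !inE Dn_full_degreeE.
rewrite -natz card_disjoint_incl_excl; apply: eq_bigr => S.
by rewrite powersetE => /card_vacute_multiples ->; rewrite natz.
Qed.
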